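(* Let $z\in\mathcal F_\infty$, and write its cycles in $\mathbb P$ as $(a_i,b_i)$ with $a_i<b_i$ and $a_1<a_2<\cdots$. Let $u$ be the permutation of $\mathbb P$ whose one-line representation is $a_1b_1a_2b_2a_3b_3\cdots$, and let $\beta=u^{-1}$. Then the set of FPF-visible inversions of $z$ equals $\mathrm{Inv}(\beta)=\{(i,j):i<j,\ \beta(i)>\beta(j)\}$.
   Context: Let $S_\infty$ be the group of finitely supported permutations of $\mathbb P=\{1,2,\dots\}$. Let $\Theta(i)=i-(-1)^i$ and $\mathcal F_\infty=\{w^{-1}\Theta w:w\in S_\infty\}$. A pair $(i,j)\in\mathbb Z\times\mathbb Z$ is an FPF-visible inversion of $z$ if $i<j$ and $z(j)<\min\{i,z(i)\}$. *)

(* positive integers P = {1,2,...} are modelled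
   as the naturals n with 0 < n; maps on P are functions nat -> nat whose
   values off P are irrelevant. *)
From mathcomp Require Import all_boot.
Set Implicit Arguments. Unset Strict Implicit. Unset Printing Implicit Defensive.

Definition permP (w : nat -> nat) : Prop :=
  (forall i, 0 < i -> 0 < w i) /\
  (forall i j, 0 < i -> 0 < j -> w i = w j -> i = j) /\
  (forall j, 0 < j -> exists2 i, 0 < i & w i = j).

Definition in_Sinf (w : nat -> nat) : Prop :=
  permP w /\ exists N, forall i, N < i -> w i = i.

Definition invP (w v : nat -> nat) : Prop :=
  forall i, 0 < i -> v (w i) = i /\ w (v i) = i.

Definition Theta (i : nat) : nat := if odd i then i.+1 else i.-1.

Definition in_Finf (z : nat -> nat) : Prop :=
  exists w v, in_Sinf w /\ invP w v /\ forall i, 0 < i -> z i = v (Theta (w i)).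

Definition fpf_visible_inv (z : nat -> nat) (i j : nat) : Prop :=
  i < j /\ z j < minn i (z i).

Definition inv_of (beta : nat -> nat) (i j : nat) : Prop :=
  i < j /\ beta j < beta i.

(* u has one-line representation a_1 b_1 a_2 b_2 ... where the cycles of z
   are (a_k, b_k), a_k < b_k, a_1 < a_2 < ... :  u is a permutation of P with
   u(2k-1) = a_k, u(2k) = b_k. *)
Definition oneline_of_cycles (z u : nat -> nat) : Prop :=
  permP u /\
  (forall k, 0 < k -> u (2 * k).-1 < u (2 * k) /\ z (u (2 * k).-1) = u (2 * k)) /\
  (forall k, 0 < k -> u (2 * k).-1 < u (2 * k.+1).-1).

(* Every i in P is either the smaller entry a_k = u (2k-1) or the larger entry
   b_k = u (2k) of the k-th cycle of z, and beta i is 2k-1 or 2k accordingly.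
   Since z swaps a_k and b_k, a_k < b_k and k |-> a_k is increasing, both
   "(i,j) is FPF-visible for z" and "beta i > beta j" reduce, in each of the
   four cases, to the same linear conditions on the two cycle indices. *)
From mathcomp Require Import all_boot.
From mathcomp Require Import zify.

Lemma Theta_gt0 {n} : 0 < n -> 0 < Theta n.
Proof. by rewrite /Theta; case: n => [|[|n]] //=; case: ifP. Qed.

Lemma ThetaK {n} : 0 < n -> Theta (Theta n) = n.
Proof.
rewrite /Theta; case: n => // n _.
by case n_odd: (odd n); rewrite /= ?n_odd /= ?n_odd.
Qed.

Lemma in_Finf_invol {z} : in_Finf z -> forall i, 0 < i -> 0 < z i /\ z (z i) = i.
Proof.
move=> [w [v [[[w_gt0 [_ w_onto]] _] [wK zE]]]] i i_gt0.
have Tw_gt0 := Theta_gt0 (w_gt0 i i_gt0).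
have v_gt0 : 0 < v (Theta (w i)).
  by have [k k_gt0 <-] := w_onto _ Tw_gt0; rewrite (wK k k_gt0).1.
rewrite !zE //; split => //.
by rewrite (wK _ Tw_gt0).2 (ThetaK (w_gt0 i i_gt0)) (wK i i_gt0).1.
Qed.

Section OnelineOfCycles.

Variables z u beta : nat -> nat.
Hypothesis z_Finf : in_Finf z.
Hypothesis u_oneline : oneline_of_cycles z u.
Hypothesis u_beta : invP u beta.

Let a k := u (2 * k).-1.
Let b k := u (2 * k).

Lemma ltn_cycle {k} : 0 < k -> a k < b k.
Proof. by move=> k_gt0; have [] := u_oneline.2.1 k k_gt0. Qed.

Lemma z_cycle_small {k} : 0 < k -> z (a k) = b k.
Proof. by move=> k_gt0; have [] := u_oneline.2.1 k k_gt0. Qed.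

Lemma z_cycle_large {k} : 0 < k -> z (b k) = a k.
Proof.
move=> k_gt0; have a_gt0 : 0 < a k by apply: u_oneline.1.1; lia.
by rewrite -(z_cycle_small k_gt0) (in_Finf_invol z_Finf _ a_gt0).2.
Qed.

Lemma ltn_cycle_small : {in [pred k | 0 < k] &, {mono a : k l / k < l}}.
Proof.
apply/leqW_mono_in/leq_mono_in/(homo_ltn_in ltn_trans) => [k l|k k_gt0 _].
  by rewrite !inE => k_gt0 _ m /andP[km _]; apply: leq_trans km.
exact: u_oneline.2.2.
Qed.

Lemma oneline_cases {x} : 0 < x -> exists2 k, 0 < k &
  (x = a k /\ beta x = (2 * k).-1) \/ (x = b k /\ beta x = 2 * k).
Proof.
move=> x_gt0; have [p p_gt0 <-] := u_oneline.1.2.2 x x_gt0.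
rewrite (u_beta _ p_gt0).1 /a /b; have := odd_double_half p.
case: (odd p) => /= p_eq.
- by exists p./2.+1; [|left; have -> : (2 * p./2.+1).-1 = p by lia].
- by exists p./2; [lia|right; have -> : 2 * p./2 = p by lia].
Qed.

Lemma fpf_visible_invE i j : 0 < i -> 0 < j ->
  fpf_visible_inv z i j <-> inv_of beta i j.
Proof.
move=> i_gt0 j_gt0; rewrite /fpf_visible_inv /inv_of.
have [k k_gt0 i_cases] := oneline_cases i_gt0.
have [l l_gt0 j_cases] := oneline_cases j_gt0.
have kl := ltn_cycle_small _ _ k_gt0 l_gt0.
have lk := ltn_cycle_small _ _ l_gt0 k_gt0.
have := ltn_cycle k_gt0; have := ltn_cycle l_gt0.
case: i_cases => -[-> ->]; case: j_cases => -[-> ->];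
  rewrite ?z_cycle_small ?z_cycle_large // => *; lia.
Qed.

End OnelineOfCycles.

Theorem lemma3p4 (z u beta : nat -> nat) :
  in_Finf z ->
  oneline_of_cycles z u ->
  invP u beta ->
  forall i j, 0 < i -> 0 < j ->
    (fpf_visible_inv z i j <-> inv_of beta i j).
Proof. exact: fpf_visible_invE. Qed.
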